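(* Let $l,r$ be positive integers. For every $n\ge r$, the sequence $k\mapsto L_r^{(l)}(n,k)$ is log-concave, i.e. $L_r^{(l)}(n,k)^2\ge L_r^{(l)}(n,k-1)L_r^{(l)}(n,k+1)$ for all $k$.
   Context: For a set partition $\Pi$ of $[n]=\{1,\dots,n\}$, the block leader set $\mathrm{bl}(\Pi)$ is the set of minimum elements of the blocks of $\Pi$. The $(l,r)$-Lah number $L_r^{(l)}(n,k)$ is the number of $l$-tuples $(\Pi_1,\dots,\Pi_l)$ where each $\Pi_j$ is a partition of $[n]$ into $k$ nonempty blocks each equipped with a linear order, such that $\{1,\dots,r\}\subseteq\mathrm{bl}(\Pi_1)$ and $\mathrm{bl}(\Pi_1)=\mathrm{bl}(\Pi_2)=\cdots=\mathrm{bl}(\Pi_l)$ (and $L_r^{(l)}(n,k)=0$ when no such tuples exist). *)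

From mathcomp Require Import all_boot.
Set Implicit Arguments. Unset Strict Implicit. Unset Printing Implicit Defensive.

(* The ground set [n] = {1,...,n} is modelled by 'I_n = {0,...,n-1}
   (order-preserving shift i |-> i+1). *)

(* A set partition of [n] with, on each block, a linear order. *)
Definition LahT (n : nat) : finType :=
  ({set {set 'I_n}} * {ffun 'I_n * 'I_n -> bool})%type.

Definition lah_partition (n k : nat) (Pi : LahT n) : bool :=
  let P := Pi.1 in let R := Pi.2 in
  [&& partition P [set: 'I_n], #|P| == k,
      [forall x, forall y, R (x, y) ==> (pblock P x == pblock P y)],
      [forall x, ~~ R (x, x)],
      [forall x, forall y, forall z, R (x, y) && R (y, z) ==> R (x, z)] &
      [forall x, forall y,
         (x != y) && (pblock P x == pblock P y) ==> R (x, y) || R (y, x)]].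

Definition bl (n : nat) (P : {set {set 'I_n}}) : {set 'I_n} :=
  [set x : 'I_n | [exists B in P, (x \in B) && [forall y in B, x <= y]]].

(* Tuples are indexed by 'I_l (Pi_1 is index 0). *)
Definition lahL (l r n k : nat) : nat :=
  #|[set t : {ffun 'I_l -> LahT n} |
      [&& [forall i, lah_partition k (t i)],
          [forall i : 'I_l, (i == 0 :> nat) ==>
              [forall x : 'I_n, (x < r) ==> (x \in bl (t i).1)]] &
          [forall i, forall j, bl (t i).1 == bl (t j).1]]]|.

From mathcomp Require Import all_boot all_algebra zify ring.
Set Implicit Arguments. Unset Strict Implicit. Unset Printing Implicit Defensive.

(* Let [L(m, k)] count the admissible [l]-tuples restricted to the first [m]
   elements.  Removing the largest element [m] gives the recurrence
   [L(m+1, k) = L(m, k-1) + [r <= m] (m+k)^l L(m, k)]: if [m] is a block leader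
   (in one, hence every, component) it forms a singleton block; otherwise it
   can be put back independently in each component in one of [m + k] places
   (right after any element, or at the head of any block), and it must be a
   leader when [m < r].  Log-concavity then follows by induction on [m] from the
   stronger inequality [L(m,k-1) L(m,k+1) (m+k+1)^l <= L(m,k)^2 (m+k)^l], which
   the recurrence preserves because the weights [(m+k)^l] are log-concave in [k]. *)

Lemma cross_term_le a0 a1 a2 a3 g0 g1 g2 g3 :
  0 < g1 -> g0 * g3 <= g1 * g2 -> (0 < a0 * a3 -> 0 < a1 * a2) ->
  a0 * a2 * g1 <= a1 ^ 2 * g0 -> a1 * a3 * g2 <= a2 ^ 2 * g1 ->
  g2 * a0 * a3 * g3 <= g1 * a1 * a2 * g2.
Proof.
move=> g1_gt0 hg hpos h1 h2.
have [a03_eq0|/hpos a12_gt0] := posnP (a0 * a3).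
  have -> : g2 * a0 * a3 * g3 = g2 * (a0 * a3) * g3 by ring.
  by rewrite a03_eq0 muln0 mul0n.
have a03_le : a0 * a3 * g2 <= a1 * a2 * g0.
  have := leq_mul h1 h2.
  have -> : a0 * a2 * g1 * (a1 * a3 * g2) = a0 * a3 * g2 * (a1 * a2 * g1) by ring.
  have -> : a1 ^ 2 * g0 * (a2 ^ 2 * g1) = a1 * a2 * g0 * (a1 * a2 * g1) by ring.
  by rewrite leq_pmul2r // muln_gt0 a12_gt0.
have -> : g2 * a0 * a3 * g3 = a0 * a3 * g2 * g3 by ring.
have -> : g1 * a1 * a2 * g2 = a1 * a2 * (g0 * g3) + a1 * a2 * (g1 * g2 - g0 * g3).
  by rewrite -mulnDr subnKC //; ring.
apply: leq_trans (leq_addr _ _); rewrite mulnA; exact: leq_mul.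
Qed.

(* The transformation [b_(j+1) = a_j + g_j a_(j+1)] preserves the ratio
   inequality [a_(j-1) a_(j+1) g_j <= a_j^2 g_(j-1)] for log-concave positive
   weights [g], with the weights shifted by one. *)
Lemma log_concave_step a0 a1 a2 a3 g0 g1 g2 g3 :
  0 < g1 -> g0 * g3 <= g1 * g2 -> (0 < a0 * a3 -> 0 < a1 * a2) ->
  a0 * a2 * g1 <= a1 ^ 2 * g0 -> a1 * a3 * g2 <= a2 ^ 2 * g1 ->
  (a0 + g0 * a1) * (a2 + g2 * a3) * g3 <= (a1 + g1 * a2) ^ 2 * g2.
Proof.
move=> g1_gt0 hg hpos h1 h2.
have le_a0a2 : a0 * a2 * g3 <= a1 ^ 2 * g2.
  rewrite -(leq_pmul2l g1_gt0).
  have -> : g1 * (a0 * a2 * g3) = a0 * a2 * g1 * g3 by ring.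
  have -> : g1 * (a1 ^ 2 * g2) = a1 ^ 2 * (g1 * g2) by ring.
  apply: leq_trans (leq_mul h1 (leqnn g3)) _; rewrite -mulnA; exact: leq_mul.
have le_a0a3 := cross_term_le g1_gt0 hg hpos h1 h2.
have le_a1a2 : g0 * a1 * a2 * g3 <= g1 * a1 * a2 * g2.
  have -> : g0 * a1 * a2 * g3 = (g0 * g3) * (a1 * a2) by ring.
  have -> : g1 * a1 * a2 * g2 = (g1 * g2) * (a1 * a2) by ring.
  by rewrite leq_mul.
have le_a1a3 : g0 * g2 * (a1 * a3) * g3 <= g1 ^ 2 * a2 ^ 2 * g2.
  have -> : g0 * g2 * (a1 * a3) * g3 = (g0 * g3) * (a1 * a3 * g2) by ring.
  have -> : g1 ^ 2 * a2 ^ 2 * g2 = (g1 * g2) * (a2 ^ 2 * g1) by ring.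
  exact: leq_mul.
have -> : (a0 + g0 * a1) * (a2 + g2 * a3) * g3 =
  a0 * a2 * g3 + g2 * a0 * a3 * g3 + g0 * a1 * a2 * g3 + g0 * g2 * (a1 * a3) * g3 by ring.
have -> : (a1 + g1 * a2) ^ 2 * g2 =
  a1 ^ 2 * g2 + g1 * a1 * a2 * g2 + g1 * a1 * a2 * g2 + g1 ^ 2 * a2 ^ 2 * g2 by ring.
by rewrite !leq_add.
Qed.

Fixpoint lah_rec (l r m k : nat) : nat :=
  match m with
  | 0 => k == 0
  | m.+1 => (if k is k'.+1 then lah_rec l r m k' else 0)
            + (if r <= m then (m + k) ^ l * lah_rec l r m k else 0)
  end.

Lemma lah_rec_small l r m k : m <= r -> lah_rec l r m k = (k == m).
Proof.
elim: m k => [|m IH] k hm //=; rewrite leqNgt hm /= addn0.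
by case: k => [|k] //=; rewrite IH ?eqSS //; apply: ltnW.
Qed.

Lemma lah_rec_gt0 l r m k : 0 < r -> r <= m -> (0 < lah_rec l r m k) = (r <= k <= m).
Proof.
move=> r_gt0; elim: m k => [|m IH] k hm; first by rewrite leqn0 in hm; rewrite (eqP hm) in r_gt0.
have [r_le_m|r_eq] : r <= m \/ r = m.+1 by lia.
  have w_gt0 : 0 < (m + k) ^ l by rewrite expn_gt0 addn_gt0 (leq_trans r_gt0 r_le_m).
  rewrite /= r_le_m; case: k w_gt0 => [|k] w_gt0.
    by rewrite add0n muln_gt0 w_gt0 IH //=; lia.
  rewrite addn_gt0 muln_gt0 w_gt0 !IH //=; apply/idP/idP; lia.
by rewrite r_eq lah_rec_small // lt0b eqn_leq andbC.
Qed.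

Lemma lah_rec_ratio l r m k : 0 < r -> r <= m ->
  lah_rec l r m k.-1 * lah_rec l r m k.+1 * (m + k + 1) ^ l
    <= lah_rec l r m k ^ 2 * (m + k) ^ l.
Proof.
move=> r_gt0; elim: m k => [|m IH] k hm; first by rewrite leqn0 in hm; rewrite (eqP hm) in r_gt0.
have [->|r_le_m] : r = m.+1 \/ r <= m by lia.
  rewrite !lah_rec_small //.
  by have -> : (k.-1 == m.+1) * (k.+1 == m.+1) = 0 by case: eqP; case: eqP => //=; lia.
set F := lah_rec l r m.
have F0 : F 0 = 0 by apply/eqP; rewrite -leqn0 leqNgt lah_rec_gt0 //; lia.
have recS j : lah_rec l r m.+1 j.+1 = F j + (m + j.+1) ^ l * F j.+1 by rewrite /= r_le_m.
case: k => [|[|j]]; try by rewrite /= r_le_m -/F F0 muln0 !mul0n.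
rewrite [k in lah_rec _ _ _ k]/= !recS.
have w_gt0 i : 0 < (m + i.+1) ^ l by rewrite expn_gt0 addnS.
have w_lc : (m + j.+1) ^ l * (m + j.+4) ^ l <= (m + j.+2) ^ l * (m + j.+3) ^ l.
  rewrite -!expnMn; case: (posnP l) => [->|l_gt0]; first by rewrite !expn0.
  by rewrite leq_exp2r //; nia.
have no_gap : 0 < F j * F j.+3 -> 0 < F j.+1 * F j.+2.
  by rewrite !muln_gt0 !lah_rec_gt0 //; lia.
have h1 := IH j.+1 r_le_m; have h2 := IH j.+2 r_le_m.
rewrite addn1 -addnS in h1; rewrite addn1 -addnS in h2.
rewrite addn1 !addSnnS -addnS; exact: log_concave_step.
Qed.

Lemma lah_rec_log_concave l r n k : 0 < r -> r <= n ->
  lah_rec l r n k.-1 * lah_rec l r n k.+1 <= lah_rec l r n k ^ 2.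
Proof.
move=> r_gt0 hn; have w_gt0 : 0 < (n + k) ^ l by rewrite expn_gt0 addn_gt0 (leq_trans r_gt0 hn).
rewrite -(leq_pmul2r w_gt0); apply: leq_trans (lah_rec_ratio l k r_gt0 hn).
rewrite leq_mul2l; apply/orP; right.
by case: (posnP l) => [->|l_gt0]; rewrite ?expn0 // leq_exp2r // addn1.
Qed.

Section Pblock.
Variable T : finType.
Implicit Types (x : T) (B : {set T}) (P : {set {set T}}).

Lemma pblock_notin_cover P x : x \notin cover P -> pblock P x = set0.
Proof.
move=> h; rewrite /pblock; case: pickP => [B /andP[PB xB]|] //=.
by case/negP: h; apply/bigcupP; exists B.
Qed.

Lemma pblockD1 P B x : trivIset P -> x \notin B -> pblock (P :\ B) x = pblock P x.
Proof.
move=> tP xB; case: (boolP (x \in cover P)) => hx.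
  have hm := pblock_mem hx; have hs : x \in pblock P x by rewrite mem_pblock.
  apply: def_pblock => //; first exact: trivIsetD.
  by rewrite in_setD1 hm andbT; apply: contraNneq xB => <-.
rewrite !pblock_notin_cover //; apply: contra hx => /bigcupP[D]; rewrite in_setD1 => /andP[_ hD] xD.
by apply/bigcupP; exists D.
Qed.

Lemma pblockU1 P B x : trivIset (B |: P) -> x \notin B -> pblock (B |: P) x = pblock P x.
Proof.
move=> tP xB; case: (boolP (x \in cover P)) => hx.
  have hm := pblock_mem hx; have hs : x \in pblock P x by rewrite mem_pblock.
  by apply: def_pblock => //; rewrite in_setU1 hm orbT.
rewrite !pblock_notin_cover //; apply: contra hx => /bigcupP[D].
rewrite in_setU1 => /orP[/eqP->|hD] xD.
  by rewrite xD in xB.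
by apply/bigcupP; exists D.
Qed.

Lemma pblockU1D1 P B1 B2 x : trivIset P -> trivIset (B2 |: (P :\ B1)) ->
  x \notin B1 -> x \notin B2 -> pblock (B2 |: (P :\ B1)) x = pblock P x.
Proof. by move=> t1 t2 h1 h2; rewrite pblockU1 // pblockD1. Qed.

End Pblock.

Section InitialSegments.
Variable N : nat.
Local Notation E := 'I_N.
Implicit Types (x y w a b : E) (B C D : {set E}) (P : {set {set E}}).

Definition init_seg (m : nat) : {set E} := [set x : E | x < m].

Definition is_min (B : {set E}) (x : E) := (x \in B) && [forall y in B, x <= y].

Lemma blP (P : {set {set E}}) x : reflect (exists2 B, B \in P & is_min B x) (x \in bl P).
Proof. rewrite inE; exact: (iffP exists_inP). Qed.

(* [lah_partition k] for the initial segment [init_seg m] of ['I_N]. *)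
Definition lah_on (m k : nat) (s : LahT N) : bool :=
  [&& partition s.1 (init_seg m), #|s.1| == k,
      [forall x : E, forall y : E, s.2 (x, y) ==> (x < m) && (y \in pblock s.1 x)],
      [forall x : E, ~~ s.2 (x, x)],
      [forall x : E, forall y : E, forall w : E, s.2 (x, y) && s.2 (y, w) ==> s.2 (x, w)] &
      [forall x : E, forall y : E, (x < m) && (x != y) && (y \in pblock s.1 x) ==>
         s.2 (x, y) || s.2 (y, x)]].

Record lah_rel (m : nat) (P : {set {set E}}) (R : {ffun E * E -> bool}) : Prop := LahRel {
  lah_part : partition P (init_seg m);
  lah_supp : forall x y : E, R (x, y) -> (x < m) /\ (y \in pblock P x);
  lah_irr : forall x : E, ~~ R (x, x);
  lah_trans : forall x y w : E, R (x, y) -> R (y, w) -> R (x, w);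
  lah_total : forall x y : E, x < m -> x != y -> y \in pblock P x -> R (x, y) || R (y, x) }.

Lemma lah_onP m k s : reflect (lah_rel m s.1 s.2 /\ #|s.1| = k) (lah_on m k s).
Proof.
apply: (iffP idP).
  case/and5P => h1 /eqP h2 /forallP h3 /forallP h4 /andP[/forallP h5 /forallP h6].
  split => //; split => //.
  - by move=> x y hR; move: (forallP (h3 x) y); rewrite hR => /andP[-> ->].
  - by move=> x y w a b; move: (forallP (forallP (h5 x) y) w); rewrite a b.
  - by move=> x y a b c; move: (forallP (h6 x) y); rewrite a b c.
case=> [[h1 h3 h4 h5 h6] h2]; apply/and5P; split => //; first exact/eqP.
- apply/forallP => x; apply/forallP => y; apply/implyP => /h3 [-> ->] //.
- exact/forallP.
apply/andP; split.
- apply/forallP => x; apply/forallP => y; apply/forallP => w.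
  by apply/implyP => /andP[a b]; apply: h5 a b.
- apply/forallP => x; apply/forallP => y; apply/implyP => /andP[/andP[a b] c].
  exact: h6.
Qed.

Section LahRelFacts.
Variables (m : nat) (P : {set {set E}}) (R : {ffun E * E -> bool}).
Hypothesis ok : lah_rel m P R.

Lemma lah_cover x : (x \in cover P) = (x < m).
Proof. by rewrite (cover_partition (lah_part ok)) inE. Qed.

Lemma lah_triv : trivIset P.
Proof. exact: partition_trivIset (lah_part ok). Qed.

Lemma lah_self x : x < m -> x \in pblock P x.
Proof. by move=> h; rewrite mem_pblock lah_cover. Qed.

Lemma lah_pblock_mem x : x < m -> pblock P x \in P.
Proof. by move=> h; apply: pblock_mem; rewrite lah_cover. Qed.

Lemma lah_def_pblock B x : B \in P -> x \in B -> pblock P x = B.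
Proof. move=> a b; exact: def_pblock lah_triv a b. Qed.

Lemma lah_lt B x : B \in P -> x \in B -> x < m.
Proof. by move=> a b; rewrite -lah_cover; apply/bigcupP; exists B. Qed.

Lemma lah_same_pblock x y : y \in pblock P x -> pblock P y = pblock P x.
Proof. exact: same_pblock lah_triv. Qed.

Lemma lah_rel_lt x y : R (x, y) -> y < m.
Proof.
case/(lah_supp ok) => hx hy; apply: (@lah_lt (pblock P x)) => //; exact: lah_pblock_mem.
Qed.

End LahRelFacts.

Lemma bl_U1 B P : bl (B |: P) = [set x | is_min B x] :|: bl P.
Proof.
apply/setP => x; rewrite in_setU [x \in [set y | is_min B y]]in_set; apply/blP/orP.
  by case=> D; rewrite in_setU1 => /orP[/eqP->|hD] h; [left|right; apply/blP; exists D].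
case=> [h|/blP[D hD h]]; [exists B => //; exact: setU11|exists D => //; exact: setU1r].
Qed.

Lemma bl_D1 P B : trivIset P -> B \in P -> bl (P :\ B) = bl P :\: B.
Proof.
move=> tP hB; apply/setP => x; rewrite in_setD; apply/blP/andP.
  case=> D; rewrite in_setD1 => /andP[nDB hD] h; split; last by apply/blP; exists D.
  move/trivIsetP: (tP) => tP'.
  have := tP' D B hD hB nDB; rewrite disjoint_sym => /disjointFl->//.
  by case/andP: h.
case=> nxB /blP[D hD h]; exists D => //; rewrite in_setD1 hD andbT.
by apply: contraNneq nxB => <-; case/andP: h.
Qed.

Lemma bl_U1D1 P B1 B2 : trivIset P -> B1 \in P -> (forall x, is_min B2 x = is_min B1 x) ->
  bl (B2 |: (P :\ B1)) = bl P.
Proof.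
move=> tP hB e; rewrite bl_U1 bl_D1 //; apply/setP => x.
rewrite in_setU in_setD [x \in [set y | is_min B2 y]]in_set e.
apply/idP/idP.
  case/orP => [h|/andP[_ ->]] //; by apply/blP; exists B1.
move=> h; case: (boolP (x \in B1)) => xB; last by apply/orP; right; rewrite h.
case/blP: h => D hD h; suff -> : B1 = D by rewrite h.
have e1 := def_pblock tP hB xB; case/andP: (h) => xD _.
by rewrite -e1 (def_pblock tP hD xD).
Qed.

Section TopElement.
Variables (m : nat) (z : E).
Hypothesis hz : nat_of_ord z = m.

Lemma ltnSz x : (x < m.+1) = (x == z) || (x < m).
Proof. by rewrite -(inj_eq val_inj) /= hz ltnS leq_eqVlt. Qed.

Lemma z_ltS : z < m.+1.
Proof. by rewrite hz. Qed.

Lemma z_notin_seg : z \notin init_seg m.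
Proof. by rewrite inE hz ltnn. Qed.

Lemma init_segS : init_seg m.+1 = z |: init_seg m.
Proof. by apply/setP => x; rewrite !inE ltnSz. Qed.

Lemma z_notin_cover P R : lah_rel m P R -> z \notin cover P.
Proof. by move=> ok; rewrite (lah_cover ok) hz ltnn. Qed.

Lemma lah_rel_zl P R b : lah_rel m P R -> R (z, b) = false.
Proof. by move=> ok; apply/negP => /(lah_supp ok) []; rewrite hz ltnn. Qed.

Lemma lah_rel_zr P R a : lah_rel m P R -> R (a, z) = false.
Proof. by move=> ok; apply/negP => /(lah_rel_lt ok); rewrite hz ltnn. Qed.

Lemma is_minU1 C x : C != set0 -> C \subset init_seg m -> is_min (z |: C) x = is_min C x.
Proof.
move=> /set0Pn[c cC] sC; rewrite /is_min; apply/andP/andP.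
  case=> /setU1P[ex|xC] /forall_inP h.
    have := h c (setU1r _ cC); have := subsetP sC c cC; rewrite inE ex hz.
    by move=> a b; have := leq_trans a b; rewrite ltnn.
  by split => //; apply/forall_inP => y yC; apply: h; rewrite setU1r.
case=> xC /forall_inP h; split; first by rewrite setU1r.
apply/forall_inP => y /setU1P[->|yC]; last exact: h.
have := subsetP sC x xC; rewrite inE hz; exact: ltnW.
Qed.

Lemma lah_bl_lt P R x : lah_rel m P R -> x \in bl P -> x < m.
Proof. move=> ok /blP[B hB /andP[xB _]]. exact: (lah_lt ok hB xB). Qed.

Lemma z_notin_bl P R : lah_rel m P R -> z \notin bl P.
Proof. by move=> ok; apply/negP => /(lah_bl_lt ok); rewrite hz ltnn. Qed.

Lemma leader_z_block P R : lah_rel m.+1 P R -> z \in bl P -> [set z] \in P.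
Proof.
move=> ok /blP[B hB /andP[zB /forall_inP hmin]].
suff -> : [set z] = B by [].
apply/setP => x; rewrite in_set1; apply/idP/idP => [/eqP->//|xB].
have h1 := hmin x xB; have h2 := lah_lt ok hB xB.
rewrite -(inj_eq val_inj) /= eqn_leq h1 andbT; move: h2; rewrite hz ltnS //.
Qed.

Lemma lah_drop_z_block P R : lah_rel m.+1 P R -> z \in bl P -> lah_rel m (P :\ [set z]) R.
Proof.
move=> ok zbl; have hB := leader_z_block ok zbl; have tP := lah_triv ok.
have pb : forall x, x != z -> pblock (P :\ [set z]) x = pblock P x.
  by move=> x xz; rewrite pblockD1 // in_set1.
have pz : pblock P z = [set z] := lah_def_pblock ok hB (set11 z).
split.
- suff -> : init_seg m = init_seg m.+1 :\: [set z] by exact: partitionD1 (lah_part ok) hB.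
  apply/setP => x; rewrite in_setD in_set1 !in_set ltnSz.
  by case: (eqVneq x z) => [->|//]; rewrite hz ltnn.
- move=> x y hR; have [hx hy] := lah_supp ok hR.
  case: (eqVneq x z) => [exz|nxz].
    subst x; rewrite pz in_set1 in hy; move/eqP: hy => eyz; subst y.
    by rewrite (negbTE (lah_irr ok z)) in hR.
  by move: hx; rewrite ltnSz (negbTE nxz) /= => hx; rewrite pb.
- exact: lah_irr ok.
- exact: lah_trans ok.
- move=> x y hx nxy; rewrite pb; last first.
    by apply: contraTneq hx => ->; rewrite hz ltnn.
  have hx' : x < m.+1 by rewrite ltnSz hx orbT.
  exact: (lah_total ok hx' nxy).
Qed.

Lemma lah_add_z_block P R : lah_rel m P R -> lah_rel m.+1 ([set z] |: P) R.
Proof.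
move=> ok.
have part : partition ([set z] |: P) (init_seg m.+1).
  rewrite init_segS; apply: partitionU1; first exact: (lah_part ok).
    by apply/set0Pn; exists z; rewrite set11.
  by rewrite disjoints1 z_notin_seg.
have tP := partition_trivIset part.
have pb : forall x, x != z -> pblock ([set z] |: P) x = pblock P x.
  by move=> x xz; rewrite pblockU1 // in_set1.
have pz : pblock ([set z] |: P) z = [set z].
  exact: (def_pblock tP (setU11 _ _) (set11 z)).
split => //.
- move=> x y hR; have [hx hy] := lah_supp ok hR.
  have xz : x != z by apply: contraTneq hx => ->; rewrite hz ltnn.
  by rewrite pb // ltnSz hx orbT.
- exact: lah_irr ok.
- exact: lah_trans ok.
- move=> x y hx nxy; case: (eqVneq x z) => [exz|nxz].
    by subst x; rewrite pz in_set1 eq_sym (negbTE nxy).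
  have hx' : x < m by move: hx; rewrite ltnSz (negbTE nxz).
  rewrite pb //; exact: (lah_total ok hx' nxy).
Qed.

Lemma card_add_z_block P R : lah_rel m P R -> #|[set z] |: P| = #|P|.+1.
Proof.
move=> ok; rewrite cardsU1; suff -> : [set z] \notin P by [].
apply/negP => h; case/negP: (z_notin_cover ok); apply/bigcupP; exists [set z] => //.
exact: set11.
Qed.

Lemma bl_add_z_block P : bl ([set z] |: P) = z |: bl P.
Proof.
rewrite bl_U1; congr (_ :|: _); apply/setP => x; rewrite in_set in_set1 /is_min in_set1.
apply/andP/idP => [[]//|/eqP->]; split => //; apply/forall_inP => y; rewrite in_set1 => /eqP->//.
Qed.

Lemma bl_drop_z_block P R : lah_rel m.+1 P R -> z \in bl P -> bl (P :\ [set z]) = bl P :\ z.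
Proof. by move=> ok zb; rewrite bl_D1 ?(lah_triv ok) ?(leader_z_block ok zb). Qed.

Definition delete_z (s : LahT N) : LahT N :=
  let Bz := pblock s.1 z in
  ((Bz :\ z) |: (s.1 :\ Bz), [ffun p => s.2 p && (p.1 != z) && (p.2 != z)]).

(* Put [z] into the block [C], right after its down-closed part [D]. *)
Definition insert_z (s : LahT N) C D : LahT N :=
  ((z |: C) |: (s.1 :\ C),
   [ffun p => s.2 p || (p.2 == z) && (p.1 \in D) || (p.1 == z) && (p.2 \in C) && (p.2 \notin D)]).

Section Insert.
Variables (P : {set {set E}}) (R : {ffun E * E -> bool}) (C D : {set E}).
Hypotheses (ok : lah_rel m P R) (hC : C \in P) (hDC : D \subset C)
  (hdown : forall a b, a \in D -> R (b, a) -> b \in D).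

Let Pn := (insert_z (P, R) C D).1.
Let Rn := (insert_z (P, R) C D).2.

Lemma insert_z_block_sub : C \subset init_seg m.
Proof. by rewrite -(cover_partition (lah_part ok)); apply: bigcup_max hC _. Qed.

Lemma insert_z_block_lt x : x \in C -> x < m.
Proof. by move=> h; have := subsetP insert_z_block_sub x h; rewrite in_set. Qed.

Lemma z_notin_block : z \notin C.
Proof. by apply/negP => /insert_z_block_lt; rewrite hz ltnn. Qed.

Lemma insert_z_block_neq0 : C != set0.
Proof. exact: partition_neq0 (lah_part ok) hC. Qed.

Lemma insert_z_partition : partition Pn (init_seg m.+1).
Proof.
have h1 := partitionD1 (lah_part ok) hC.
have -> : init_seg m.+1 = (z |: C) :|: (init_seg m :\: C).
  apply/setP => x; rewrite init_segS !in_setU !in_set1 in_setD.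
  case: (boolP (x \in C)) => xC /=; last by rewrite orbF.
  by rewrite (subsetP insert_z_block_sub x xC) !orbT.
rewrite /Pn /=; apply: (partitionU1 h1); first by apply/set0Pn; exists z; exact: setU11.
rewrite -setI_eq0; apply/eqP/setP => x; rewrite !inE.
case: (eqVneq x z) => [->|] /=; first by rewrite hz ltnn andbF.
by case: (x \in C).
Qed.

Lemma insert_z_triv : trivIset Pn.
Proof. exact: partition_trivIset insert_z_partition. Qed.

Lemma insert_z_pblock_in x : x \in z |: C -> pblock Pn x = z |: C.
Proof. move=> h; exact: (def_pblock insert_z_triv (setU11 _ _) h). Qed.

Lemma insert_z_pblock_out x : x \notin z |: C -> pblock Pn x = pblock P x.
Proof.
move=> h; apply: (pblockU1D1 (lah_triv ok) insert_z_triv _ h).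
by apply: contra h => xC; rewrite setU1r.
Qed.

Lemma insert_z_relE a b : Rn (a, b) =
  R (a, b) || (b == z) && (a \in D) || (a == z) && (b \in C) && (b \notin D).
Proof. by rewrite /Rn /insert_z /= ffunE. Qed.

Lemma z_notin_below : z \notin D.
Proof. by apply: contra z_notin_block; apply: (subsetP hDC). Qed.

Lemma insert_z_pblock_C x : x \in C -> pblock P x = C.
Proof. exact: (lah_def_pblock ok hC). Qed.

Lemma insert_z_supp x y : Rn (x, y) -> x < m.+1 /\ y \in pblock Pn x.
Proof.
rewrite insert_z_relE => /orP[/orP[h|/andP[/eqP e h]]|/andP[/andP[/eqP e h1] h2]].
- have [hx hy] := lah_supp ok h; split; first by rewrite ltnSz hx orbT.
  case: (boolP (x \in C)) => xC.
    by rewrite insert_z_pblock_in ?setU1r // -(insert_z_pblock_C xC).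
  rewrite insert_z_pblock_out //; apply/negP => /setU1P[exz|xC']; last by rewrite xC' in xC.
  by move: hx; rewrite exz hz ltnn.
- subst y; have xC := subsetP hDC x h; split; first by rewrite ltnSz (insert_z_block_lt xC) orbT.
  by rewrite insert_z_pblock_in; [exact: setU11 | exact: setU1r].
- subst x; split; first by rewrite ltnSz eqxx.
  by rewrite insert_z_pblock_in; [exact: setU1r | exact: setU11].
Qed.

Lemma insert_z_irr x : ~~ Rn (x, x).
Proof.
rewrite insert_z_relE (negbTE (lah_irr ok x)) /=; apply/negP.
case/orP => [/andP[/eqP e h]|/andP[/andP[/eqP e h1] _]]; subst x.
  by move: z_notin_below; rewrite h.
by move: z_notin_block; rewrite h1.
Qed.

Lemma insert_z_trans x y w : Rn (x, y) -> Rn (y, w) -> Rn (x, w).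
Proof.
rewrite !insert_z_relE => /orP[/orP[h|/andP[/eqP e h]]|/andP[/andP[/eqP e h1] h2]].
- move=> /orP[/orP[h'|/andP[/eqP e' h']]|/andP[/andP[/eqP e' _] _]].
  + by rewrite (lah_trans ok h h').
  + by subst w; rewrite (hdown h' h) eqxx orbT.
  + by subst y; rewrite (lah_rel_zr _ ok) in h.
- subst y; move=> /orP[/orP[h'|/andP[/eqP e' h']]|/andP[/andP[_ wC] wD]].
  + by rewrite (lah_rel_zl _ ok) in h'.
  + by subst w; move: z_notin_below; rewrite h'.
  + have xC := subsetP hDC x h.
    have xw : x != w by apply: contraNneq wD => <-.
    have wx : w \in pblock P x by rewrite insert_z_pblock_C.
    case/orP: (lah_total ok (insert_z_block_lt xC) xw wx) => [->//|hwx].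
    by rewrite (hdown h hwx) in wD.
- subst x; move=> /orP[/orP[h'|/andP[/eqP e' h']]|/andP[/andP[/eqP e' h1'] _]].
  + have [_ hw] := lah_supp ok h'.
    have wC : w \in C by rewrite -(insert_z_pblock_C h1).
    have wD : w \notin D by apply: contra h2 => wD; exact: (hdown wD h').
    by rewrite eqxx wC wD orbT.
  + by subst w; rewrite h' in h2.
  + by subst y; move: z_notin_block; rewrite h1.
Qed.

Lemma insert_z_total x y : x < m.+1 -> x != y -> y \in pblock Pn x -> Rn (x, y) || Rn (y, x).
Proof.
move=> hx nxy; rewrite !insert_z_relE.
have old_total (a b : E) : R (a, b) || R (b, a) ->
    (R (a, b) || (b == z) && (a \in D) || (a == z) && (b \in C) && (b \notin D)) ||
    (R (b, a) || (a == z) && (b \in D) || (b == z) && (a \in C) && (a \notin D)).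
  by case/orP => ->; rewrite ?orbT.
case: (boolP (x \in z |: C)) => xzC; last first.
  rewrite insert_z_pblock_out // => hy; apply: old_total.
  have xz : x != z by apply: contra xzC => /eqP->; exact: setU11.
  by apply: (lah_total ok) hy; move: hx; rewrite ltnSz (negbTE xz).
rewrite insert_z_pblock_in // => hy.
case/setU1P: xzC => [exz|xC].
  subst x; case/setU1P: hy => [eyz|yC]; first by rewrite eyz eqxx in nxy.
  by case: (boolP (y \in D)) => yD; rewrite eqxx ?yC /= ?orbT.
case/setU1P: hy => [eyz|yC].
  by subst y; case: (boolP (x \in D)) => xD; rewrite eqxx ?xC /= ?orbT.
apply: old_total; apply: (lah_total ok (insert_z_block_lt xC) nxy).
by rewrite insert_z_pblock_C.
Qed.

Lemma lah_insert_z : lah_rel m.+1 Pn Rn.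
Proof.
split; [exact: insert_z_partition | exact: insert_z_supp | exact: insert_z_irr
       | exact: insert_z_trans | exact: insert_z_total].
Qed.

Lemma insert_z_new_block : z |: C \notin P :\ C.
Proof.
apply/negP; rewrite in_setD1 => /andP[_ h]; case/negP: (z_notin_cover ok).
by apply/bigcupP; exists (z |: C) => //; exact: setU11.
Qed.

Lemma insert_z_card : #|Pn| = #|P|.
Proof. by rewrite /Pn /= cardsU1 insert_z_new_block (cardsD1 C P) hC. Qed.

Lemma insert_z_bl : bl Pn = bl P.
Proof.
exact: bl_U1D1 (lah_triv ok) hC (fun x => is_minU1 x insert_z_block_neq0 insert_z_block_sub).
Qed.

Lemma z_notin_bl_insert_z : z \notin bl Pn.
Proof. by rewrite insert_z_bl; exact: (z_notin_bl ok). Qed.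

Lemma insert_zK : delete_z (insert_z (P, R) C D) = (P, R).
Proof.
rewrite /delete_z; congr pair.
  have -> : pblock (insert_z (P, R) C D).1 z = z |: C by apply: insert_z_pblock_in; exact: setU11.
  by rewrite /= setU1K ?z_notin_block // setU1K ?insert_z_new_block // setD1K.
apply/ffunP => -[a b]; rewrite ffunE /= -/Rn insert_z_relE /=.
case: (eqVneq a z) => [->|az]; first by rewrite (lah_rel_zl _ ok) /= !andbF.
case: (eqVneq b z) => [->|bz]; first by rewrite (lah_rel_zr _ ok) /= !andbF.
by rewrite /= ?andbT ?andbF ?orbF ?andbT.
Qed.
End Insert.

(* Where [z] can be inserted: right after an element [y], or at the head of a block [B]. *)
Definition slots (s : LahT N) : {set ('I_N + {set 'I_N})%type} :=
  [set inl y | y in init_seg m] :|: [set inr B | B in s.1].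

Definition insert_at (s : LahT N) (p : ('I_N + {set 'I_N})%type) : LahT N :=
  match p with
  | inl y => insert_z s (pblock s.1 y) [set a | (a == y) || s.2 (a, y)]
  | inr B => insert_z s B set0
  end.

Section Delete.
Variables (P : {set {set E}}) (R : {ffun E * E -> bool}).
Hypotheses (ok : lah_rel m.+1 P R) (nzb : z \notin bl P).

Let Bz := pblock P z.
Let C := Bz :\ z.
Let P' := (delete_z (P, R)).1.
Let R' := (delete_z (P, R)).2.

Lemma pblock_z_mem : Bz \in P.
Proof. exact: (lah_pblock_mem ok z_ltS). Qed.

Lemma mem_pblock_z : z \in Bz.
Proof. exact: (lah_self ok z_ltS). Qed.

Lemma delete_z_block_neq0 : C != set0.
Proof.
apply/negP => /eqP e; case/negP: nzb; apply/blP; exists Bz; first exact: pblock_z_mem.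
apply/andP; split; first exact: mem_pblock_z.
apply/forall_inP => y yB; case: (eqVneq y z) => [->//|yz].
have : y \in C by rewrite in_setD1 yz yB.
by rewrite e inE.
Qed.

Lemma delete_z_block_sub : C \subset init_seg m.
Proof.
apply/subsetP => x; rewrite in_setD1 => /andP[xz xB].
have := lah_lt ok pblock_z_mem xB; rewrite ltnSz (negbTE xz) /= => h; by rewrite in_set.
Qed.

Lemma setU1_delete_z_block : z |: C = Bz.
Proof. exact: setD1K mem_pblock_z. Qed.

Lemma delete_z_block_new : C \notin P :\ Bz.
Proof.
apply/negP; rewrite in_setD1 => /andP[nCB hCP].
move/trivIsetP: (lah_triv ok) => tP.
have := tP C Bz hCP pblock_z_mem nCB; case/set0Pn: delete_z_block_neq0 => x xC.
have xB : x \in Bz by move: xC; rewrite in_setD1 => /andP[].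
by move/disjointFr => /(_ x xC); rewrite xB.
Qed.

Lemma delete_z_partE : P' = C |: (P :\ Bz).
Proof. by []. Qed.

Lemma delete_z_partition : partition P' (init_seg m).
Proof.
have h1 := partitionD1 (lah_part ok) pblock_z_mem.
have -> : init_seg m = C :|: (init_seg m.+1 :\: Bz).
  apply/setP => x; rewrite in_setU in_setD1 in_setD !in_set ltnSz.
  case: (eqVneq x z) => [->|xz] /=; first by rewrite hz ltnn mem_pblock_z.
  case: (boolP (x \in Bz)) => xB //=.
  by have := lah_lt ok pblock_z_mem xB; rewrite ltnSz (negbTE xz).
rewrite delete_z_partE; apply: (partitionU1 h1); first exact: delete_z_block_neq0.
rewrite -setI_eq0; apply/eqP/setP => x; rewrite !inE.
by case: (x \in Bz); rewrite /= ?andbF.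
Qed.

Lemma delete_z_triv : trivIset P'.
Proof. exact: partition_trivIset delete_z_partition. Qed.

Lemma delete_z_pblock_in x : x \in C -> pblock P' x = C.
Proof. move=> h; exact: (def_pblock delete_z_triv (setU11 _ _) h). Qed.

Lemma delete_z_pblock_out x : x \notin Bz -> pblock P' x = pblock P x.
Proof.
move=> h; apply: (pblockU1D1 (lah_triv ok) delete_z_triv h).
by rewrite in_setD1 negb_and h orbT.
Qed.

Lemma delete_z_relE a b : R' (a, b) = R (a, b) && (a != z) && (b != z).
Proof. by rewrite /R' /delete_z /= ffunE. Qed.

Lemma lah_delete_z : lah_rel m P' R'.
Proof.
have pB x : x \in Bz -> pblock P x = Bz by exact: (lah_def_pblock ok pblock_z_mem).
split.
- exact: delete_z_partition.
- move=> x y; rewrite delete_z_relE => /andP[/andP[h xz] yz].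
  have [hx hy] := lah_supp ok h.
  split; first by move: hx; rewrite ltnSz (negbTE xz).
  case: (boolP (x \in Bz)) => xB.
    rewrite delete_z_pblock_in; last by rewrite in_setD1 xz.
    by rewrite in_setD1 yz -(pB x xB).
  by rewrite delete_z_pblock_out.
- by move=> x; rewrite delete_z_relE (negbTE (lah_irr ok x)).
- move=> x y w; rewrite !delete_z_relE => /andP[/andP[h1 xz] _] /andP[/andP[h2 _] wz].
  by rewrite (lah_trans ok h1 h2) xz wz.
- move=> x y hx nxy hy.
  have xz : x != z by apply: contraTneq hx => ->; rewrite hz ltnn.
  have yc : y \in cover P'.
    apply/bigcupP; exists (pblock P' x) => //; apply: pblock_mem.
    by rewrite (cover_partition delete_z_partition) in_set.
  have yz : y != z.
    by apply: contraTneq yc => ->; rewrite (cover_partition delete_z_partition) in_set hz ltnn.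
  have hy' : y \in pblock P x.
    case: (boolP (x \in Bz)) => xB.
      by move: hy; rewrite delete_z_pblock_in ?in_setD1 ?xz // (pB x xB) => /andP[].
    by rewrite -delete_z_pblock_out.
  have hx' : x < m.+1 by rewrite ltnSz hx orbT.
  by rewrite !delete_z_relE xz yz /= !andbT; exact: (lah_total ok hx' nxy hy').
Qed.

Lemma delete_z_card : #|P'| = #|P|.
Proof. by rewrite delete_z_partE cardsU1 delete_z_block_new (cardsD1 Bz P) pblock_z_mem. Qed.

Lemma is_min_delete_z_block x : is_min C x = is_min Bz x.
Proof. by rewrite -(is_minU1 x delete_z_block_neq0 delete_z_block_sub) setU1_delete_z_block. Qed.

Lemma delete_z_bl : bl P' = bl P.
Proof. exact: (bl_U1D1 (lah_triv ok) pblock_z_mem is_min_delete_z_block). Qed.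

Lemma reinsert_z_partition : (z |: C) |: (P' :\ C) = P.
Proof.
by rewrite delete_z_partE setU1K ?delete_z_block_new // setU1_delete_z_block setD1K // pblock_z_mem.
Qed.

Lemma pred_z_block a : R (a, z) -> a \in C.
Proof.
move=> h; have [ha hza] := lah_supp ok h; rewrite in_setD1.
have -> : a != z by apply: contraTneq h => ->; rewrite (negbTE (lah_irr ok z)).
by rewrite /Bz (lah_same_pblock ok hza) (lah_self ok ha).
Qed.

Lemma succ_z_block b : R (z, b) -> b \in Bz.
Proof. by case/(lah_supp ok). Qed.

(* The immediate predecessor of [z] is the one with the most predecessors. *)
Lemma immediate_pred_z a0 : R (a0, z) ->
  exists2 y, R (y, z) & forall a, R (a, z) -> (a == y) || R (a, y).
Proof.
move=> h0.
have [y /= hy hmax] := @arg_maxnP _ a0 [pred y | R (y, z)] (fun y => #|[set b | R (b, y)]|) h0.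
exists y => // a ha; case: (eqVneq a y) => [//|ay] /=.
have am : a < m.+1.
  by move: (pred_z_block ha); rewrite in_setD1 => /andP[_ /(lah_lt ok pblock_z_mem)].
have yaB : y \in pblock P a.
  move: (pred_z_block ha) (pred_z_block hy); rewrite !in_setD1 => /andP[_ aB] /andP[_ yB].
  by rewrite (lah_def_pblock ok pblock_z_mem aB).
case/orP: (lah_total ok am ay yaB) => // hya.
have := hmax a ha; rewrite leqNgt => /negP; case; apply: proper_card.
apply/properP; split.
  by apply/subsetP => b; rewrite !in_set => hb; exact: (lah_trans ok hb hya).
by exists y; rewrite !in_set ?hya // (negbTE (lah_irr ok y)).
Qed.

Lemma insert_at_delete_z_after y : R (y, z) ->
    (forall a, R (a, z) -> (a == y) || R (a, y)) ->
  insert_at (delete_z (P, R)) (inl y) = (P, R).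
Proof.
move=> hy maxy; have yC := pred_z_block hy.
have yz : y != z by move: yC; rewrite in_setD1 => /andP[].
rewrite /insert_at /=; have -> : pblock (delete_z (P, R)).1 y = C by exact: delete_z_pblock_in.
rewrite /insert_z; congr pair; first exact: reinsert_z_partition.
apply/ffunP => -[a b]; rewrite ffunE /= -/R' !delete_z_relE in_setD1 !in_set !ffunE /=.
case: (eqVneq a z) => [->|az]; case: (eqVneq b z) => [->|bz] /=.
- by rewrite (negbTE (lah_irr ok z)) eq_sym (negbTE yz) !andbF.
- rewrite !andbF orbF /= yz !andbT; apply/idP/idP.
    case/andP=> bB hn; have zb : z != b by rewrite eq_sym.
    case/orP: (lah_total ok z_ltS zb bB) => // hbz.
    by have := maxy b hbz; rewrite (negbTE hn).
  move=> h; rewrite succ_z_block //=.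
  apply/negP => /orP[/eqP eby|hby].
    by subst b; have := lah_trans ok h hy; rewrite (negbTE (lah_irr ok z)).
  by have := lah_trans ok (lah_trans ok h hby) hy; rewrite (negbTE (lah_irr ok z)).
- rewrite !andbT andbF !orbF yz !andbT; apply/idP/idP.
    by case/orP => [//|/orP[/eqP->//|hay]]; exact: (lah_trans ok hay hy).
  by move=> h; have := maxy a h.
- by rewrite !andbT !orbF.
Qed.

Lemma insert_at_delete_z_first : (forall a, R (a, z) = false) ->
  insert_at (delete_z (P, R)) (inr C) = (P, R).
Proof.
move=> nz; rewrite /insert_at /insert_z; congr pair; first exact: reinsert_z_partition.
apply/ffunP => -[a b]; rewrite ffunE /= -/R' !delete_z_relE in_set0 in_setD1.
case: (eqVneq a z) => [->|az]; case: (eqVneq b z) => [->|bz] /=.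
- by rewrite (negbTE (lah_irr ok z)) !andbF.
- rewrite !andbF andbT /=; apply/idP/idP.
    case/andP => bB _; have zb : z != b by rewrite eq_sym.
    by case/orP: (lah_total ok z_ltS zb bB) => //; rewrite nz.
  by move=> h; rewrite succ_z_block // inE.
- by rewrite nz.
- by rewrite !andbT !orbF.
Qed.

Lemma insert_at_surj :
  exists2 p, p \in slots (delete_z (P, R)) & insert_at (delete_z (P, R)) p = (P, R).
Proof.
case: (pickP [pred a | R (a, z)]) => [a0 /immediate_pred_z [y hy maxy]|none].
  exists (inl y); last exact: insert_at_delete_z_after.
  rewrite in_setU imset_f // in_set.
  move: (pred_z_block hy); rewrite in_setD1 => /andP[yz /(lah_lt ok pblock_z_mem)].
  by rewrite ltnSz (negbTE yz).
exists (inr C); last exact: insert_at_delete_z_first.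
by rewrite in_setU imset_f ?orbT //; apply: setU11.
Qed.
End Delete.

Lemma insert_at_rel_z P R p a : lah_rel m P R -> a != z ->
  (insert_at (P, R) p).2 (a, z) = (if p is inl y then (a == y) || R (a, y) else false).
Proof.
move=> ok az; case: p => [y|B]; rewrite /insert_at /insert_z /= ffunE /= (lah_rel_zr _ ok) eqxx /=;
  by rewrite (negbTE az) ?andbF ?in_set ?inE ?orbF.
Qed.

Lemma insert_at_z_rel P R B b : lah_rel m P R -> b != z ->
  (insert_at (P, R) (inr B)).2 (z, b) = (b \in B).
Proof.
move=> ok bz; rewrite /insert_at /insert_z /= ffunE /= (lah_rel_zl _ ok) eqxx.
by rewrite (negbTE bz) /= inE /= ?andbT.
Qed.

Lemma insert_at_inj P R : lah_rel m P R -> {in slots (P, R) &, injective (insert_at (P, R))}.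
Proof.
move=> ok p1 p2 h1 h2 e.
have eR q : (insert_at (P, R) p1).2 q = (insert_at (P, R) p2).2 q by rewrite e.
have Am : forall y, inl y \in slots (P, R) -> y != z.
  move=> y; rewrite in_setU => /orP[/imsetP[y' hy' [->]]|/imsetP[B _ //]].
  by apply: contraTneq hy' => ->; exact: z_notin_seg.
have PB : forall B, inr B \in slots (P, R) -> B \in P.
  by move=> B; rewrite in_setU => /orP[/imsetP[y' _ //]|/imsetP[B' hB' [->]]].
case: p1 p2 h1 h2 e eR => [y1|B1] [y2|B2] h1 h2 _ eR.
- have y1z := Am _ h1; have y2z := Am _ h2.
  have := eR (y1, z); rewrite !insert_at_rel_z // eqxx /= => /esym/orP[/eqP->//|r12].
  have := eR (y2, z); rewrite !insert_at_rel_z // eqxx /= => /orP[/eqP->//|r21].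
  by have := lah_trans ok r12 r21; rewrite (negbTE (lah_irr ok y1)).
- have y1z := Am _ h1.
  by have := eR (y1, z); rewrite !insert_at_rel_z // eqxx.
- have y2z := Am _ h2.
  by have := eR (y2, z); rewrite !insert_at_rel_z // eqxx.
- congr inr; apply/setP => b; case: (eqVneq b z) => [->|bz].
    have zc := z_notin_cover ok.
    have nB : forall B, B \in P -> z \notin B.
      by move=> B hB; apply: contra zc => zB; apply/bigcupP; exists B.
    by rewrite (negbTE (nB _ (PB _ h1))) (negbTE (nB _ (PB _ h2))).
  by have := eR (z, b); rewrite !insert_at_z_rel.
Qed.

Lemma card_init_seg : m <= N -> #|init_seg m| = m.
Proof.
move=> mN; rewrite -[in RHS](card_ord m).
have -> : init_seg m = [set widen_ord mN i | i : 'I_m].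
  apply/setP => x; rewrite in_set; apply/idP/imsetP => [h|[i _ ->]] //=.
  by exists (Ordinal h) => //; apply/val_inj.
by rewrite card_imset //; move=> i j /(congr1 val) /= /val_inj.
Qed.

Lemma slots_inl s y : (inl y \in slots s) = (y \in init_seg m).
Proof.
rewrite in_setU; apply/orP/idP => [[]|h]; last by left; exact: imset_f.
  by case/imsetP => q hq [->].
by case/imsetP => q _ h; discriminate h.
Qed.

Lemma slots_inr s B : (inr B \in slots s) = (B \in s.1).
Proof.
rewrite in_setU; apply/orP/idP => [[]|h]; last by right; exact: imset_f.
  by case/imsetP => q _ h; discriminate h.
by case/imsetP => q hq [->].
Qed.

Definition fiber_z k (s' : LahT N) :=
  [set s : LahT N | lah_on m.+1 k s && (z \notin bl s.1) && (delete_z s == s')].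

Lemma fiber_zE k s' : lah_on m k s' -> fiber_z k s' = insert_at s' @: slots s'.
Proof.
case: s' => P R /lah_onP[ok hk] /=; apply/setP => s; rewrite in_set.
apply/idP/imsetP.
  case: s => sP sR /andP[/andP[/lah_onP[/= oks hks] nzb] /eqP e].
  case: (insert_at_surj oks nzb) => p; rewrite e => hp hs; by exists p.
case=> p hp ->.
have [C [D [hC hDC hdown ->]]] : exists C D, [/\ C \in P, D \subset C,
    (forall a b, a \in D -> R (b, a) -> b \in D) & insert_at (P, R) p = insert_z (P, R) C D].
  case: p hp => [y|B]; [rewrite slots_inl | rewrite slots_inr] => hy'.
  - rewrite in_set in hy'.
    exists (pblock P y), [set a | (a == y) || R (a, y)]; split => //.
    + exact: (lah_pblock_mem ok hy').
    + apply/subsetP => a; rewrite in_set => /orP[/eqP->|hay]; first exact: (lah_self ok hy').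
      have [am ya] := lah_supp ok hay; rewrite (lah_same_pblock ok ya).
      exact: (lah_self ok am).
    + move=> a b; rewrite !in_set => /orP[/eqP->|hay] hba; first by rewrite hba orbT.
      by rewrite (lah_trans ok hba hay) orbT.
  - exists B, set0; split => //; first exact: sub0set.
    by move=> a b; rewrite inE.
rewrite (insert_zK D ok hC) eqxx andbT (z_notin_bl_insert_z D ok hC) andbT.
apply/lah_onP; split; first exact: (lah_insert_z ok hC hDC hdown).
by rewrite (insert_z_card D ok hC).
Qed.

Lemma card_fiber_z k s' : lah_on m k s' -> #|fiber_z k s'| = m + k.
Proof.
move=> hs; rewrite fiber_zE // card_in_imset; last first.
  by case: s' hs => P R /lah_onP[ok _]; exact: insert_at_inj.
case: s' hs => P R /lah_onP[ok <-] /=.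
rewrite /slots cardsU.
have -> : [set inl y | y in init_seg m] :&: [set inr B | B in P] = set0.
  apply/setP => q; rewrite !inE; apply/negP => /andP[/imsetP[y _ ->] /imsetP[B _ //]].
rewrite cards0 subn0 !card_imset; first by rewrite card_init_seg // -hz ltnW.
  by move=> a b [].
by move=> a b [].
Qed.

Definition drop_z_block (s : LahT N) : LahT N := (s.1 :\ [set z], s.2).
Definition add_z_block (s : LahT N) : LahT N := ([set z] |: s.1, s.2).

Lemma drop_z_block_facts k s : lah_on m.+1 k.+1 s -> z \in bl s.1 ->
  [/\ lah_on m k (drop_z_block s), bl (drop_z_block s).1 = bl s.1 :\ z
    & add_z_block (drop_z_block s) = s].
Proof.
case: s => P R /lah_onP[/= ok hk] /= zb; have hB := leader_z_block ok zb.
split.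
- apply/lah_onP; split; first exact: lah_drop_z_block ok zb.
  by move: hk; rewrite /= (cardsD1 [set z] P) hB add1n => -[].
- exact: bl_drop_z_block ok zb.
- by rewrite /add_z_block /drop_z_block /= setD1K.
Qed.

Lemma add_z_block_facts k s : lah_on m k s ->
  [/\ lah_on m.+1 k.+1 (add_z_block s), bl (add_z_block s).1 = z |: bl s.1
    & drop_z_block (add_z_block s) = s].
Proof.
case: s => P R /lah_onP[/= ok hk]; split.
- apply/lah_onP; split; first exact: lah_add_z_block ok.
  by rewrite /= (card_add_z_block ok) hk.
- exact: bl_add_z_block.
- rewrite /add_z_block /drop_z_block /= setU1K //; apply/negP => h; case/negP: (z_notin_cover ok).
  by apply/bigcupP; exists [set z] => //; exact: set11.
Qed.

Lemma delete_z_facts k s : lah_on m.+1 k s -> z \notin bl s.1 ->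
  lah_on m k (delete_z s) /\ bl (delete_z s).1 = bl s.1.
Proof.
case: s => P R /lah_onP[/= ok hk] /= zb; split.
- apply/lah_onP; split; first exact: lah_delete_z ok zb.
  by rewrite delete_z_card.
- exact: delete_z_bl ok zb.
Qed.
End TopElement.

Lemma card_family_const (I T : finType) (F : I -> {set T}) (c : nat) :
  (forall i, #|F i| = c) ->
  #|[set t : {ffun I -> T} | [forall i, t i \in F i]]| = c ^ #|I|.
Proof.
move=> hc.
have -> : #|[set t : {ffun I -> T} | [forall i, t i \in F i]]| =
    #|(family (fun i => mem (F i)) : simpl_pred {ffun I -> T})|.
  apply: eq_card => t; rewrite in_set; apply/forallP/familyP => h i; have := h i => //.
rewrite card_family cardE /image_mem.
elim: (enum I) => [|a s IH] /=; first by [].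
by rewrite hc IH expnS.
Qed.

Lemma lah_on0 k s : lah_on 0 k s = (s == (set0, [ffun _ => false])) && (k == 0).
Proof.
have seg0 : init_seg 0 = set0 by apply/setP => x; rewrite !inE.
apply/lah_onP/andP => [[ok <-]|[/eqP -> /eqP ->]].
  have eP : s.1 = set0 by apply/eqP; rewrite -partition_set0 -seg0 (lah_part ok).
  have eR : s.2 = [ffun _ => false].
    by apply/ffunP => -[a b]; rewrite ffunE; apply/negP => /(lah_supp ok)[]; rewrite ltn0.
  by rewrite eP cards0; split => //; case: s ok eP eR => P R _ /= -> ->.
split; last exact: cards0.
split => //=; first by rewrite seg0 partition_set0.
- by move=> x y; rewrite ffunE.
- by move=> x; rewrite ffunE.
- by move=> x y w; rewrite ffunE.
Qed.

Section Tuples.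
Variables (l r : nat).
Local Notation TT := {ffun 'I_l -> LahT N}.

Definition leaders_lt_r m (t : TT) :=
  [forall i : 'I_l, (i == 0 :> nat) ==>
     [forall x : E, (x < r) && (x < m) ==> (x \in bl (t i).1)]].
Definition same_bl (t : TT) := [forall i, forall j, bl (t i).1 == bl (t j).1].
Definition lah_tuples m k :=
  [set t : TT | [&& [forall i, lah_on m k (t i)], leaders_lt_r m t & same_bl t]].

Lemma same_blP (t : TT) : reflect (forall i j, bl (t i).1 = bl (t j).1) (same_bl t).
Proof.
apply: (iffP forallP) => h i; first by move=> j; apply/eqP; exact: (forallP (h i) j).
by apply/forallP => j; apply/eqP.
Qed.

Lemma mem_lah_tuples m k t :
  (t \in lah_tuples m k) = [&& [forall i, lah_on m k (t i)], leaders_lt_r m t & same_bl t].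
Proof. by rewrite inE. Qed.

Hypothesis l_gt0 : 0 < l.
Let i0 : 'I_l := Ordinal l_gt0.

Lemma leaders_lt_rP m (t : TT) :
  reflect (forall x : E, x < r -> x < m -> x \in bl (t i0).1) (leaders_lt_r m t).
Proof.
apply: (iffP forallP) => h.
  by move=> x hr hm; have := h i0; rewrite eqxx /= => /forallP/(_ x); rewrite hr hm.
move=> i; apply/implyP => /eqP hi; have -> : i = i0 by apply/val_inj.
by apply/forallP => x; apply/implyP => /andP[a b]; exact: h.
Qed.

Lemma card_lah_tuples0 k : #|lah_tuples 0 k| = (k == 0).
Proof.
have [->|nk] := eqVneq k 0; last first.
  apply/eqP; rewrite cards_eq0; apply/eqP/setP => t; rewrite !inE.
  by apply/negP => /andP[/forallP/(_ i0)]; rewrite lah_on0 (negbTE nk) andbF.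
have -> : lah_tuples 0 0 = [set [ffun _ => (set0, [ffun _ => false]) : LahT N]].
  apply/setP => t; rewrite !inE; apply/idP/idP.
    case/andP => /forallP h _; apply/eqP/ffunP => i; rewrite ffunE.
    by have := h i; rewrite lah_on0 andbT => /eqP.
  move/eqP->; apply/and3P; split.
  - by apply/forallP => i; rewrite ffunE lah_on0 !eqxx.
  - by apply/leaders_lt_rP => x _; rewrite ltn0.
  - by apply/same_blP => i j; rewrite !ffunE.
by rewrite cards1.
Qed.

Section TupleStep.
Variables (m : nat) (z : E).
Hypothesis hz : nat_of_ord z = m.

Let z_leads := [set t : TT | z \in bl (t i0).1].

Lemma lah_tuples_leaderE k : lah_tuples m.+1 k.+1 :&: z_leads =
  [set [ffun i => add_z_block z (t i)] | t : TT in lah_tuples m k].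
Proof.
apply/setP => t; rewrite in_setI mem_lah_tuples inE; apply/idP/imsetP.
  case/andP => /and3P[/forallP hok hlead /same_blP heq] zb.
  have zbi i : z \in bl (t i).1 by rewrite (heq i i0).
  exists [ffun i => drop_z_block z (t i)].
    rewrite mem_lah_tuples; apply/and3P; split.
    - by apply/forallP => i; rewrite ffunE; case: (drop_z_block_facts hz (hok i) (zbi i)).
    - apply/leaders_lt_rP => x hr hm; rewrite ffunE.
      case: (drop_z_block_facts hz (hok i0) (zbi i0)) => _ -> _.
      rewrite in_setD1; apply/andP; split; first by apply: contraTneq hm => ->; rewrite hz ltnn.
      by move/leaders_lt_rP: hlead; apply => //; rewrite (ltnSz hz) hm orbT.
    - apply/same_blP => i j; rewrite !ffunE.
      case: (drop_z_block_facts hz (hok i) (zbi i)) => _ -> _.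
      by case: (drop_z_block_facts hz (hok j) (zbi j)) => _ -> _; rewrite (heq i j).
  by apply/ffunP => i; rewrite !ffunE; case: (drop_z_block_facts hz (hok i) (zbi i)).
case=> t' /[!mem_lah_tuples] /and3P[/forallP hok hlead /same_blP heq] ->.
apply/andP; split; [apply/and3P; split|].
- by apply/forallP => i; rewrite ffunE; case: (add_z_block_facts hz (hok i)).
- apply/leaders_lt_rP => x hr hm; rewrite ffunE.
  case: (add_z_block_facts hz (hok i0)) => _ -> _; rewrite in_setU1.
  move: hm; rewrite (ltnSz hz) => /orP[->//|hm]; apply/orP; right.
  by move/leaders_lt_rP: hlead; apply.
- apply/same_blP => i j; rewrite !ffunE.
  case: (add_z_block_facts hz (hok i)) => _ -> _.
  by case: (add_z_block_facts hz (hok j)) => _ -> _; rewrite (heq i j).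
- by rewrite ffunE; case: (add_z_block_facts hz (hok i0)) => _ -> _; exact: setU11.
Qed.

Lemma card_lah_tuples_leader k : #|lah_tuples m.+1 k :&: z_leads| =
  if k is k'.+1 then #|lah_tuples m k'| else 0.
Proof.
case: k => [|k].
  apply/eqP; rewrite cards_eq0; apply/eqP/setP => t; rewrite in_setI mem_lah_tuples !inE.
  apply/negP => /andP[/and3P[/forallP/(_ i0)/lah_onP[_ /eqP]]].
  by rewrite cards_eq0 => /eqP e _ _ /exists_inP[B]; rewrite e inE.
rewrite lah_tuples_leaderE card_in_imset // => t1 t2 /[!mem_lah_tuples].
move=> /and3P[/forallP h1 _ _] /and3P[/forallP h2 _ _] e; apply/ffunP => i.
have := congr1 (fun t : TT => drop_z_block z (t i)) e; rewrite !ffunE.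
by case: (add_z_block_facts hz (h1 i)) => _ _ ->; case: (add_z_block_facts hz (h2 i)) => _ _ ->.
Qed.

Let delete_z_tuple (t : TT) : TT := [ffun i => delete_z z (t i)].

Lemma delete_z_tuple_mem k t :
  t \in lah_tuples m.+1 k :\: z_leads -> delete_z_tuple t \in lah_tuples m k.
Proof.
rewrite in_setD mem_lah_tuples inE => /andP[nzb /and3P[/forallP hok hlead /same_blP heq]].
have nzi i : z \notin bl (t i).1 by rewrite (heq i i0).
rewrite mem_lah_tuples; apply/and3P; split.
- by apply/forallP => i; rewrite ffunE; case: (delete_z_facts hz (hok i) (nzi i)).
- apply/leaders_lt_rP => x hxr hxm; rewrite ffunE.
  case: (delete_z_facts hz (hok i0) (nzi i0)) => _ ->.
  by move/leaders_lt_rP: hlead; apply => //; rewrite (ltnSz hz) hxm orbT.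
- apply/same_blP => i j; rewrite !ffunE.
  case: (delete_z_facts hz (hok i) (nzi i)) => _ ->.
  by case: (delete_z_facts hz (hok j) (nzi j)) => _ ->; rewrite (heq i j).
Qed.

(* The fibre of [delete_z_tuple] over [t'] is the product of the fibres of
   [delete_z] over the components of [t']. *)
Lemma card_delete_z_tuple_fiber k t' : r <= m -> t' \in lah_tuples m k ->
  #|[pred t | (t \in lah_tuples m.+1 k :\: z_leads) && (delete_z_tuple t == t')]| = (m + k) ^ l.
Proof.
move=> hr /[!mem_lah_tuples] /and3P[/forallP hok' hlead' /same_blP heq'].
have := card_family_const (fun i => card_fiber_z hz (hok' i)); rewrite card_ord => <-.
apply: eq_card => t; rewrite [in RHS]inE unfold_in in_setD mem_lah_tuples inE.
apply/idP/forallP.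
  case/andP => /andP[nzb /and3P[/forallP hok _ /same_blP heq]] /eqP <- i.
  by rewrite inE ffunE hok eqxx (heq i i0) nzb.
move=> hf.
have hf' i : [/\ lah_on m.+1 k (t i), z \notin bl (t i).1 & delete_z z (t i) = t' i].
  by have := hf i; rewrite inE => /andP[/andP[a b] /eqP c].
have bli i : bl (t i).1 = bl (t' i).1.
  by case: (hf' i) => a b <-; case: (delete_z_facts hz a b).
apply/andP; split; last by apply/eqP/ffunP => i; rewrite ffunE; case: (hf' i).
apply/andP; split; first by case: (hf' i0).
apply/and3P; split.
- by apply/forallP => i; case: (hf' i).
- apply/leaders_lt_rP => x hxr hxm; rewrite bli.
  move/leaders_lt_rP: hlead'; apply => //.
  by move: hxm; rewrite (ltnSz hz) => /orP[/eqP exz|//]; move: hxr; rewrite exz hz ltnNge hr.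
- by apply/same_blP => i j; rewrite !bli (heq' i j).
Qed.

Lemma card_lah_tuples_nonleader k : #|lah_tuples m.+1 k :\: z_leads| =
  if r <= m then (m + k) ^ l * #|lah_tuples m k| else 0.
Proof.
case: (leqP r m) => hr; last first.
  apply/eqP; rewrite cards_eq0; apply/eqP/setP => t; rewrite in_setD mem_lah_tuples in_set0.
  apply/negP => /andP[/negP nzb /and3P[_ hlead _]]; apply: nzb; rewrite in_set.
  by move/leaders_lt_rP: hlead; apply; rewrite hz // ltnSn.
rewrite -[LHS]sum1_card (partition_big delete_z_tuple (mem (lah_tuples m k))) /=; last first.
  exact: delete_z_tuple_mem.
rewrite (eq_bigr (fun _ => (m + k) ^ l)) ?sum_nat_const 1?mulnC // => t' ht'.
rewrite -(card_delete_z_tuple_fiber hr ht') -sum1_card; apply: eq_bigl => t.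
by rewrite [in RHS]unfold_in.
Qed.

Lemma card_lah_tuplesS k : #|lah_tuples m.+1 k| =
  (if k is k'.+1 then #|lah_tuples m k'| else 0)
  + (if r <= m then (m + k) ^ l * #|lah_tuples m k| else 0).
Proof.
by rewrite -(cardsID z_leads) card_lah_tuples_leader card_lah_tuples_nonleader.
Qed.
End TupleStep.
End Tuples.
End InitialSegments.

Lemma card_lah_tuples N l r m k : 0 < l -> 0 < r -> m <= N ->
  #|lah_tuples N l r m k| = lah_rec l r m k.
Proof.
move=> l_gt0 r_gt0; elim: m k => [|m IH] k hm; first by rewrite card_lah_tuples0.
rewrite (card_lah_tuplesS r l_gt0 (z := Ordinal hm)) //=.
by case: k => [|k]; rewrite ?IH // ltnW.
Qed.

Lemma lah_partition_onE n k (s : LahT n) : lah_partition k s = lah_on n k s.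
Proof.
have seg_full : init_seg n n = [set: 'I_n] by apply/setP => x; rewrite !inE ltn_ord.
rewrite /lah_partition /lah_on seg_full.
case hp : (partition s.1 [set: 'I_n]) => //=.
have tP := partition_trivIset hp.
have cov (x : 'I_n) : x \in cover s.1 by rewrite (cover_partition hp) inE.
congr [&& _, _, _, _ & _].
all: by apply: eq_forallb => x; apply: eq_forallb => y; rewrite ltn_ord eq_pblock.
Qed.

Lemma lahL_tuples l r n k : lahL l r n k = #|lah_tuples n l r n k|.
Proof.
rewrite /lahL; apply: eq_card => t; rewrite mem_lah_tuples [in LHS]in_set.
congr [&& _, _ & _].
- by apply: eq_forallb => i; rewrite lah_partition_onE.
- apply: eq_forallb => i; congr (_ ==> _); apply: eq_forallb => x.
  by rewrite ltn_ord andbT.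
Qed.

Theorem mainTheorem8 (l r n k : nat) (hl : 0 < l) (hr : 0 < r) (hn : r <= n)
    (hk : 0 < k) :
  lahL l r n k.-1 * lahL l r n k.+1 <= lahL l r n k ^ 2.
Proof.
rewrite !lahL_tuples !card_lah_tuples //; exact: lah_rec_log_concave.
Qed.
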